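(* Let $k\ge 2$ be an integer and let $\hat\lambda_k$ denote the value of $\lambda$ at the first double mode of the Poisson distribution of order $k$ (as defined in the context). Then $$\hat\lambda_k \ge \frac{2}{k+1}.$$
   Context: For an integer $k\ge1$ and a real $\lambda>0$, the Poisson distribution of order $k$ with parameter $\lambda$ is the distribution on $\{0,1,2,\dots\}$ with probability mass function $$f_k(n;\lambda)=e^{-k\lambda}\sum_{\substack{n_1,\dots,n_k\ge 0\\ n_1+2n_2+\dots+kn_k=n}}\frac{\lambda^{n_1+\dots+n_k}}{n_1!\cdots n_k!},\qquad n=0,1,2,\dots$$ A mode is any $n$ at which $f_k(n;\lambda)$ attains its global maximum over $n\ge0$. The distribution has a double mode at $m_1\neq m_2$ if $m_1$ and $m_2$ are exactly the two modes. The ''first double mode'' refers to the smallest value of $\lambda>0$, denoted $\hat\lambda_k$, at which the distribution has a double mode; at this value the two modes are $0$ and a positive integer $\hat m_k$. *)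

From HB Require Import structures.
From mathcomp Require Import all_boot all_order all_algebra.
From mathcomp Require Import reals.
From mathcomp Require Import sequences exp.
Set Implicit Arguments. Unset Strict Implicit. Unset Printing Implicit Defensive.
Import Order.TTheory GRing.Theory Num.Theory.
Local Open Scope ring_scope.

(* f_k(n; lam) = e^{-k lam} * sum over (n_1,...,n_k) >= 0 with
   n_1 + 2 n_2 + ... + k n_k = n of lam^(n_1+...+n_k) / (n_1! ... n_k!).
   The tuple is t : 'I_k -> 'I_(n+1), with t i playing the role of n_(i+1);
   the bound n_i <= n loses nothing since i*n_i <= n. *)
Definition poisson_k_pmf (R : realType) (k n : nat) (lam : R) : R :=
  expR (- (k%:R * lam)) *
  \sum_(t : {ffun 'I_k -> 'I_n.+1} | (\sum_(i < k) i.+1 * t i)%N == n)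
     lam ^+ (\sum_(i < k) (t i : nat))%N / ((\prod_(i < k) (t i)`!)%N)%:R.

Definition is_mode (R : realType) (k : nat) (lam : R) (n : nat) : Prop :=
  forall m : nat, poisson_k_pmf k m lam <= poisson_k_pmf k n lam.

Definition has_double_mode (R : realType) (k : nat) (lam : R) : Prop :=
  exists m1 m2 : nat, m1 <> m2 /\
    forall n : nat, is_mode k lam n <-> (n = m1 \/ n = m2).

Definition is_first_double_mode (R : realType) (k : nat) (lam0 : R) : Prop :=
  0 < lam0 /\ has_double_mode k lam0 /\
  forall lam : R, 0 < lam -> has_double_mode k lam -> lam0 <= lam.

From HB Require Import structures.
From mathcomp Require Import all_boot all_order all_algebra.
From mathcomp Require Import reals.
From mathcomp Require Import sequences exp.
From mathcomp Require Import zify ring lra.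

(* Write f_k(n) = e^{-k lam} S(n).  Splitting n = sum_i i n_i over the parts
   gives the recurrence n S(n) = lam * sum_{i = 1}^{min(k, n)} i S(n - i).
   At a positive mode m every S(m - i) is at most S(m), so
   m <= lam * min(k, m) (min(k, m) + 1) / 2 <= lam * m (k + 1) / 2.
   A double mode has a positive mode, whence lam >= 2 / (k + 1). *)

Set Implicit Arguments. Unset Strict Implicit. Unset Printing Implicit Defensive.
Import Order.TTheory GRing.Theory Num.Theory.
Local Open Scope ring_scope.

Lemma leq_bigD1_ord k (F : 'I_k -> nat) i : (F i <= \sum_(l < k) F l)%N.
Proof. by rewrite (bigD1 i) //= leq_addr. Qed.

Lemma leq_bigD2_ord k (F : 'I_k -> nat) i j :
  i != j -> (F i + F j <= \sum_(l < k) F l)%N.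
Proof. by move=> nij; rewrite (bigD1 i) //= (bigD1 j) 1?eq_sym //=; lia. Qed.

Lemma double_sum_iota_trunc k m :
  (2 * \sum_(i < k) i.+1 * (i.+1 <= m) = minn k m * (minn k m).+1)%N.
Proof.
elim: k => [|k IHk]; first by rewrite big_ord0 min0n.
rewrite big_ord_recr /= mulnDr IHk.
case: (ltnP k m) => km.
  by rewrite (minn_idPl km) muln1; lia.
by rewrite (minn_idPr (leqW km)) muln0; lia.
Qed.

Lemma double_sum_iota_trunc_le k m :
  (2 * \sum_(i < k) i.+1 * (i.+1 <= m) <= m * k.+1)%N.
Proof. by rewrite double_sum_iota_trunc leq_mul ?geq_minr ?ltnS ?geq_minl. Qed.

Section PoissonOrderK.
Variables (R : realType) (k : nat) (lam : R).

Definition pk_weight n (t : {ffun 'I_k -> 'I_n.+1}) : nat :=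
  \sum_(i < k) i.+1 * t i.

Definition pk_term n (t : {ffun 'I_k -> 'I_n.+1}) : R :=
  lam ^+ (\sum_(i < k) (t i : nat))%N / ((\prod_(i < k) (t i)`!)%N)%:R.

Definition pk_sum n : R := \sum_(t : {ffun 'I_k -> 'I_n.+1} | pk_weight t == n) pk_term t.

Lemma poisson_k_pmfE n : poisson_k_pmf k n lam = expR (- (k%:R * lam)) * pk_sum n.
Proof. by []. Qed.

Lemma prod_fact_neq0 n (t : {ffun 'I_k -> 'I_n.+1}) :
  ((\prod_(i < k) (t i)`!)%N%:R != 0 :> R).
Proof. by rewrite pnatr_eq0 -lt0n prodn_gt0 // => i; exact: fact_gt0. Qed.

Lemma pk_sum0 : pk_sum 0 = 1.
Proof.
have zero_only (t : {ffun 'I_k -> 'I_1}) : t = [ffun=> ord0].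
  by apply/ffunP => j; rewrite ffunE; apply/val_inj; case: (t j) => -[].
rewrite /pk_sum (bigD1 [ffun=> ord0]) /=; last first.
  by rewrite /pk_weight big1 // => i _; rewrite ffunE muln0.
rewrite big1 ?addr0 => [|t /andP[_ /eqP[]]]; last exact: zero_only.
rewrite /pk_term big1 => [|i _]; last by rewrite ffunE.
by rewrite big1 ?div1r ?invr1 // => i _; rewrite ffunE.
Qed.

Section Bump.
Variables (p : nat) (i : 'I_k).

Definition bump_at (t : {ffun 'I_k -> 'I_p.+1}) : {ffun 'I_k -> 'I_(p + i.+1).+1} :=
  [ffun j => inord (t j + (j == i))].

Definition unbump_at (t : {ffun 'I_k -> 'I_(p + i.+1).+1}) : {ffun 'I_k -> 'I_p.+1} :=
  [ffun j => inord (t j - (j == i))].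

Lemma bump_atE t j : (bump_at t j : nat) = (t j + (j == i))%N.
Proof.
by rewrite /bump_at ffunE inordK //; have := ltn_ord (t j); case: (j == i) => /=; lia.
Qed.

Lemma bump_atK : cancel bump_at unbump_at.
Proof.
move=> t; apply/ffunP => j; apply/val_inj.
by rewrite /unbump_at ffunE bump_atE addnK inord_val.
Qed.

(* The weight constraint bounds every coordinate of [t] by [p] once the
   [i]-th one is lowered by one. *)
Lemma unbump_atK t :
  pk_weight t = (p + i.+1)%N -> (0 < t i)%N -> bump_at (unbump_at t) = t.
Proof.
move=> wt ti_gt0; apply/ffunP => j; apply/val_inj => /=.
rewrite bump_atE /unbump_at ffunE inordK.
  by case: (eqVneq j i) => [->|] /=; lia.
case: (eqVneq j i) => [->|nji] /=.
  by have := leq_bigD1_ord (fun l => l.+1 * t l)%N i; rewrite -/(pk_weight t) wt /=; nia.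
by have := leq_bigD2_ord (fun l => l.+1 * t l)%N nji; rewrite -/(pk_weight t) wt /=; nia.
Qed.

Lemma sum_add_indicator (F : 'I_k -> nat) c :
  (\sum_(j < k) (F j + c * (j == i)) = \sum_(j < k) F j + c)%N.
Proof.
rewrite big_split /=; congr (_ + _)%N.
by rewrite (bigD1 i) //= eqxx muln1 big1 ?addn0 // => j /negbTE ->; rewrite muln0.
Qed.

Lemma pk_weight_bump_at t : pk_weight (bump_at t) = (pk_weight t + i.+1)%N.
Proof.
rewrite /pk_weight -(sum_add_indicator (fun j => j.+1 * t j)%N).
by apply: eq_bigr => j _; rewrite bump_atE mulnDr; case: eqVneq => [->|]; rewrite ?muln0.
Qed.

Lemma pk_term_bump_at t : (bump_at t i)%:R * pk_term (bump_at t) = lam * pk_term t.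
Proof.
have sizeE : (\sum_(j < k) (bump_at t j : nat) = \sum_(j < k) (t j : nat) + 1)%N.
  rewrite -(sum_add_indicator (fun j => t j)).
  by apply: eq_bigr => j _; rewrite bump_atE mul1n.
have factE : (\prod_(j < k) (bump_at t j)`! = (t i).+1 * \prod_(j < k) (t j)`!)%N.
  rewrite (bigD1 i) //= [in RHS](bigD1 i) //= bump_atE eqxx addn1 factS mulnA.
  by congr (_ * _)%N; apply: eq_bigr => j /negbTE nji; rewrite bump_atE nji addn0.
rewrite /pk_term sizeE factE bump_atE eqxx !addn1 natrM exprS.
by field; rewrite prod_fact_neq0 -(natrD R 1) pnatr_eq0.
Qed.

Lemma sum_mult_pk_term_shift :
  \sum_(t : {ffun 'I_k -> 'I_(p + i.+1).+1} | pk_weight t == (p + i.+1)%N)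
    (t i)%:R * pk_term t = lam * pk_sum p.
Proof.
rewrite (bigID (fun t : {ffun 'I_k -> 'I_(p + i.+1).+1} => 0 < t i)%N) /=.
rewrite [X in _ + X]big1 ?addr0; last first.
  by move=> t /andP[_]; rewrite lt0n negbK => /eqP ->; rewrite mul0r.
rewrite (reindex_onto bump_at unbump_at) => [|t /andP[/eqP wt ti_gt0]]; last first.
  exact: unbump_atK.
rewrite /pk_sum mulr_sumr; apply: eq_big => [t|t _]; last exact: pk_term_bump_at.
by rewrite pk_weight_bump_at bump_atE eqxx addn1 eqn_add2r bump_atK eqxx !andbT.
Qed.

End Bump.

Lemma sum_mult_pk_term m (i : 'I_k) :
  \sum_(t : {ffun 'I_k -> 'I_m.+1} | pk_weight t == m) (t i)%:R * pk_term t
  = if (i.+1 <= m)%N then lam * pk_sum (m - i.+1) else 0.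
Proof.
case: (leqP i.+1 m) => [im|mi].
  have [p mE] : exists p, m = (p + i.+1)%N by exists (m - i.+1)%N; lia.
  by subst m; rewrite sum_mult_pk_term_shift addnK.
apply: big1 => t /eqP wt.
have := leq_bigD1_ord (fun l => l.+1 * t l)%N i; rewrite -/(pk_weight t) wt /=.
by case: (nat_of_ord (t i)) => [|x]; rewrite ?mul0r //; lia.
Qed.

(* Multiply [pk_term t] by [n = sum_i (i + 1) t_i] and exchange the sums. *)
Lemma pk_sum_rec m :
  m%:R * pk_sum m =
  lam * \sum_(i < k) i.+1%:R * (if (i.+1 <= m)%N then pk_sum (m - i.+1) else 0).
Proof.
rewrite /pk_sum mulr_sumr.
under eq_bigr => t /eqP wt.
  rewrite -[m in m%:R]wt /pk_weight natr_sum mulr_suml.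
  under eq_bigr => j _ do rewrite natrM -mulrA.
  over.
rewrite exchange_big /= mulr_sumr; apply: eq_bigr => i _.
by rewrite -mulr_sumr sum_mult_pk_term; case: ifP; rewrite ?mulr0 // mulrCA.
Qed.

Lemma mode_lower_bound m :
  0 <= lam -> (0 < m)%N -> is_mode k lam m -> 2 / k.+1%:R <= lam.
Proof.
move=> lam_ge0 m_gt0 mode_m.
have le_mode n : pk_sum n <= pk_sum m.
  by have := mode_m n; rewrite !poisson_k_pmfE ler_pM2l // expR_gt0.
have pk_sum_m_gt0 : 0 < pk_sum m by rewrite (lt_le_trans _ (le_mode 0)) ?pk_sum0.
pose c := (\sum_(i < k) i.+1 * (i.+1 <= m))%N.
have m_le : m%:R <= lam * c%:R.
  rewrite -(ler_pM2r pk_sum_m_gt0) pk_sum_rec -mulrA ler_wpM2l // /c natr_sum mulr_suml.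
  apply: ler_sum => i _; rewrite natrM -mulrA ler_pM2l //.
  by case: ifP => _; rewrite ?mul1r ?mul0r.
have c_le : 2 * c%:R <= m%:R * k.+1%:R :> R.
  by rewrite -!natrM ler_nat double_sum_iota_trunc_le.
have lam_c_le : 2 * (lam * c%:R) <= lam * (m%:R * k.+1%:R).
  by rewrite mulrCA ler_wpM2l.
have m_pos : 0 < m%:R :> R by rewrite ltr0n.
rewrite ler_pdivrMr ?ltr0n // -(ler_pM2l m_pos); lra.
Qed.

End PoissonOrderK.

Lemma double_mode_has_pos_mode (R : realType) k (lam : R) :
  has_double_mode k lam -> exists2 m, (0 < m)%N & is_mode k lam m.
Proof.
case=> [[|m1] [m2 [neq_m modesE]]].
  by exists m2; [case: m2 neq_m {modesE} | apply/modesE; right].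
by exists m1.+1 => //; apply/modesE; left.
Qed.

Theorem proposition2 (R : realType) (k : nat) (hk : (2 <= k)%N) (lam0 : R) :
  is_first_double_mode k lam0 -> 2 / (k.+1)%:R <= lam0.
Proof.
move=> [lam0_gt0 [double_mode _]].
have [m m_gt0 mode_m] := double_mode_has_pos_mode double_mode.
exact: (mode_lower_bound (ltW lam0_gt0) m_gt0 mode_m).
Qed.
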